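(* Let $A\in\mathbb{R}^{m\times N}$, $\eta\ge0$, let $x\in\mathbb{R}^N$ be nonzero, let $k\in\{1,\dots,N\}$, and let $y=Ax+\varepsilon$ with $\lVert\varepsilon\rVert_2\le\eta$. Let $1<q\le\infty$ and set $C_q(k,x)=\left(4k^{1-1/q}+s_q(x)^{1-1/q}\right)^{q/(q-1)}$. If $\rho_{q,C_q(k,x)}(A)>0$, then any solution $\hat x$ of $$\min_{z\in\mathbb{R}^N\setminus\{0\}}\frac{\lVert z\rVert_1}{\lVert z\rVert_q}\quad\text{subject to}\quad\lVert y-Az\rVert_2\le\eta$$ obeys $$\lVert\hat x-x\rVert_q\le\frac{2\eta}{\rho_{q,C_q(k,x)}(A)}+k^{1/q-1}\sigma_{k,1}(x),$$ $$\lVert\hat x-x\rVert_1\le\frac{\left(4k^{1-1/q}+2s_q(x)^{1-1/q}\right)\eta}{\rho_{q,C_q(k,x)}(A)}+\left(4+(s_q(x)/k)^{1-1/q}\right)\sigma_{k,1}(x).$$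
   Context: For nonzero $z\in\mathbb{R}^N$ and $q\in(1,\infty)$, $s_q(z)=\left(\lVert z\rVert_1/\lVert z\rVert_q\right)^{q/(q-1)}$ (so $s_q(z)^{1-1/q}=\lVert z\rVert_1/\lVert z\rVert_q$), and $s_\infty(z)=\lVert z\rVert_1/\lVert z\rVert_\infty$. For real $s\ge1$, $\rho_{q,s}(A)=\min\{\lVert Az\rVert_2/\lVert z\rVert_q: z\ne0,\ s_q(z)\le s\}$. For $q=\infty$ interpret $q/(q-1)=1$, $1-1/q=1$, $1/q-1=-1$. $\sigma_{k,1}(x)=\inf\{\lVert x-z\rVert_1: z\in\mathbb{R}^N \text{ has at most } k \text{ nonzero entries}\}$ is the $\ell_1$-error of best $k$-term approximation. *)

From HB Require Import structures.
From mathcomp Require Import all_boot all_order all_algebra.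
From mathcomp Require Import all_classical all_reals all_analysis.
Set Implicit Arguments. Unset Strict Implicit. Unset Printing Implicit Defensive.
Import Order.TTheory GRing.Theory Num.Theory.
Local Open Scope classical_set_scope.
Local Open Scope ring_scope.

Section Defs.
Variable R : realType.

Definition l1norm N (z : 'cV[R]_N) : R := \sum_i `|z i ord0|.
Definition l2norm N (z : 'cV[R]_N) : R := Num.sqrt (\sum_i (z i ord0) ^+ 2).
Definition linfnorm N (z : 'cV[R]_N) : R := \big[Num.max/0]_i `|z i ord0|.

(* q in (1, +oo] is an extended real; the value at -oo is irrelevant junk *)
Definition lqnorm (q : \bar R) N (z : 'cV[R]_N) : R :=
  match q with
  | +oo%E => linfnorm z
  | r%:E => (\sum_i `|z i ord0| `^ r) `^ r^-1
  | -oo%E => 0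
  end.

Definition qexp (q : \bar R) : R :=
  match q with r%:E => 1 - r^-1 | _ => 1 end.

Definition qconj (q : \bar R) : R :=
  match q with r%:E => r / (r - 1) | _ => 1 end.

Definition sq (q : \bar R) N (z : 'cV[R]_N) : R :=
  (l1norm z / lqnorm q z) `^ qconj q.

Definition rho (q : \bar R) (s : R) m N (A : 'M[R]_(m, N)) : R :=
  inf [set r | exists z : 'cV[R]_N,
         [/\ z != 0, sq q z <= s & r = l2norm (A *m z) / lqnorm q z]].

Definition sigma1 (k : nat) N (x : 'cV[R]_N) : R :=
  inf [set r | exists z : 'cV[R]_N,
         (#|[set i : 'I_N | z i ord0 != 0%R]%SET| <= k)%N /\ r = l1norm (x - z)].

Definition Cq (q : \bar R) (k : nat) N (x : 'cV[R]_N) : R :=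
  (4 * (k%:R `^ qexp q) + sq q x `^ qexp q) `^ qconj q.

Definition is_solution (q : \bar R) m N (A : 'M[R]_(m, N)) (y : 'cV[R]_m)
  (eta : R) (xhat : 'cV[R]_N) : Prop :=
  [/\ xhat != 0, l2norm (y - A *m xhat) <= eta &
      forall z : 'cV[R]_N, z != 0 -> l2norm (y - A *m z) <= eta ->
        l1norm xhat / lqnorm q xhat <= l1norm z / lqnorm q z].

End Defs.

(* Write h = xhat - x and let z be any k-sparse vector, with support T.  Since x is
   feasible, the optimality of xhat gives ||xhat||_1 <= ||x||_1 + r ||h||_q with
   r = ||x||_1/||x||_q = s_q(x)^(1-1/q); comparing h with x - z coordinatewise on T
   and off T, and bounding ||h_T||_1 <= k^(1-1/q) ||h||_q by Hoelder (here via
   Young's inequality), yields ||h||_1 <= (2 k^(1-1/q) + r) ||h||_q + 2 ||x - z||_1.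
   Either ||h||_1 <= (4 k^(1-1/q) + r) ||h||_q, i.e. s_q(h) <= C_q(k,x), and then
   rho ||h||_q <= ||A h||_2 <= 2 eta; or the distance term dominates and
   ||h||_q <= k^(1/q-1) ||x - z||_1.  Taking the infimum over z gives sigma_{k,1}(x). *)

From HB Require Import structures.
From mathcomp Require Import all_boot all_order all_algebra.
From mathcomp Require Import all_classical all_reals all_analysis.
From mathcomp Require Import ring lra.
Import Order.TTheory GRing.Theory Num.Theory.
Local Open Scope ring_scope.
Set Implicit Arguments. Unset Strict Implicit.

Section powR.
Variable R : realType.

Lemma powRV (x r : R) : 0 <= x -> (x^-1) `^ r = (x `^ r)^-1.
Proof. by move=> x0; rewrite -powR_inv1 // powRAC powR_inv1 ?powR_ge0. Qed.

Lemma powR_div (x y r : R) : 0 <= x -> 0 <= y -> (x / y) `^ r = x `^ r / y `^ r.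
Proof. by move=> x0 y0; rewrite powRM ?invr_ge0 // powRV. Qed.

Lemma convex_powR_le (r t u v : R) : 1 <= r -> 0 <= t <= 1 -> 0 <= u -> 0 <= v ->
  (t * u + (1 - t) * v) `^ r <= t * u `^ r + (1 - t) * v `^ r.
Proof.
move=> r1 /andP[t0 t1] u0 v0.
have := @convex_powR R r r1 (Itv01 t0 t1) u v.
rewrite !inE /= !in_itv /= !andbT => /(_ u0 v0).
by rewrite !convRE.
Qed.

End powR.

Section pnorm.
Variable R : realType.

Definition pnorm (r : R) n (f : 'I_n -> R) : R := (\sum_i `|f i| `^ r) `^ r^-1.

Variables (r : R) (n : nat).
Implicit Types (f : 'I_n -> R).

Lemma pnorm_ge0 f : 0 <= pnorm r f.
Proof. exact: powR_ge0. Qed.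

Lemma sum_powR_ge0 f : 0 <= \sum_i `|f i| `^ r.
Proof. by apply: sumr_ge0 => i _; apply: powR_ge0. Qed.

Lemma pnorm_eq0 f : pnorm r f = 0 -> forall i, f i = 0.
Proof.
move=> /powR_eq0_eq0 /eqP; rewrite psumr_eq0 => [/allP f0 i|i _]; last exact: powR_ge0.
by move/implyP: (f0 i (mem_index_enum i)) => /(_ isT) /eqP /powR_eq0_eq0 /normr0_eq0.
Qed.

Hypothesis r_gt0 : 0 < r.

Lemma powR_pnorm f : pnorm r f `^ r = \sum_i `|f i| `^ r.
Proof. by rewrite -powRrM mulVf ?gt_eqF // powRr1 // sum_powR_ge0. Qed.

Lemma pnorm_le f (c : R) : 0 <= c -> \sum_i `|f i| `^ r <= c `^ r -> pnorm r f <= c.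
Proof.
move=> c0 fc; rewrite -[leRHS](@powRr1 _ c) // -(mulfV (lt0r_neq0 r_gt0)) powRrM.
by apply: ge0_ler_powR; rewrite ?nnegrE ?invr_ge0 ?sum_powR_ge0 ?powR_ge0 // ltW.
Qed.

Lemma sum_powR_normalized f : 0 < pnorm r f ->
  \sum_i (`|f i| / pnorm r f) `^ r = 1.
Proof.
move=> f0; under eq_bigr do rewrite powR_div ?(ltW f0) //.
by rewrite -mulr_suml powR_pnorm mulfV // gt_eqF // -powR_pnorm powR_gt0.
Qed.

End pnorm.

Lemma sum_powR_add_le (R : realType) (r na nb : R) n (a b : 'I_n -> R) : 1 <= r ->
  0 < na -> 0 < nb ->
  \sum_i (`|a i| / na) `^ r = 1 -> \sum_i (`|b i| / nb) `^ r = 1 ->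
  \sum_i `|a i + b i| `^ r <= (na + nb) `^ r.
Proof.
move=> r1 na0 nb0 suma sumb.
have nanb0 : 0 < na + nb := addr_gt0 na0 nb0.
pose t := na / (na + nb).
have t01 : 0 <= t <= 1.
  by rewrite /t divr_ge0 ?(ltW na0) ?(ltW nanb0) //= ler_pdivrMr // mul1r lerDl ltW.
have t1 : 1 - t = nb / (na + nb).
  by rewrite /t; field; rewrite lt0r_neq0.
have pointwise i : `|a i + b i| `^ r <=
    (na + nb) `^ r * (t * (`|a i| / na) `^ r + (1 - t) * (`|b i| / nb) `^ r).
  have comb : (na + nb) * (t * (`|a i| / na) + (1 - t) * (`|b i| / nb)) = `|a i| + `|b i|.
    by rewrite t1 /t; field; rewrite !lt0r_neq0.
  have u0 : 0 <= `|a i| / na by rewrite divr_ge0 // ltW.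
  have v0 : 0 <= `|b i| / nb by rewrite divr_ge0 // ltW.
  apply: le_trans (ler_wpM2l (powR_ge0 _ _) (convex_powR_le r1 t01 u0 v0)).
  rewrite -powRM ?comb ?(ltW nanb0) //; last by rewrite -(pmulr_rge0 _ nanb0) comb addr_ge0.
  apply: ge0_ler_powR (ler_normD _ _); rewrite ?nnegrE ?addr_ge0 //.
  exact: le_trans ler01 r1.
apply: le_trans (ler_sum _ (fun i _ => pointwise i)) _.
by rewrite -mulr_sumr big_split /= -!mulr_sumr suma sumb !mulr1 subrKC mulr1.
Qed.

Lemma minkowski (R : realType) (r : R) n (a b : 'I_n -> R) : 1 <= r ->
  pnorm r (fun i => a i + b i) <= pnorm r a + pnorm r b.
Proof.
move=> r1; have r0 : 0 < r by apply: lt_le_trans r1.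
have [a0|a0] := eqVneq (pnorm r a) 0.
  by rewrite a0 add0r /pnorm; under eq_bigr do rewrite (pnorm_eq0 a0) add0r.
have [b0|b0] := eqVneq (pnorm r b) 0.
  by rewrite b0 addr0 /pnorm; under eq_bigr do rewrite (pnorm_eq0 b0) addr0.
have pa : 0 < pnorm r a by rewrite lt0r a0; apply: pnorm_ge0.
have pb : 0 < pnorm r b by rewrite lt0r b0; apply: pnorm_ge0.
apply: pnorm_le; first exact: r0.
  exact: addr_ge0 (ltW pa) (ltW pb).
exact: sum_powR_add_le r1 pa pb (sum_powR_normalized r0 pa) (sum_powR_normalized r0 pb).
Qed.

Section power_mean.
Variables (R : realType) (r : R).
Hypothesis r_gt1 : 1 < r.

Let r_gt0 : 0 < r. Proof. exact: lt_trans r_gt1. Qed.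

Lemma young1 (u : R) : 0 <= u -> u <= u `^ r / r + (1 - r^-1).
Proof.
move=> u0.
have s0 : 0 < (1 - r^-1)^-1 by rewrite invr_gt0 subr_gt0 invf_lt1.
have := @conjugate_powR R u 1 r _ u0 ler01 r_gt0 s0.
by rewrite invrK addrC subrK mulr1 powR1 mul1r => /(_ erefl).
Qed.

Lemma sum_le_of_sum_powR n (g : 'I_n -> R) (P : pred 'I_n) (c : R) :
  (forall i, 0 <= g i) -> \sum_i g i `^ r <= c -> #|P|%:R <= c ->
  \sum_(i | P i) g i <= c.
Proof.
move=> g0 sumc Pc.
apply: le_trans (_ : \sum_(i | P i) (g i `^ r / r + (1 - r^-1)) <= _).
  by apply: ler_sum => i _; apply: young1.
rewrite big_split /= -mulr_suml sumr_const -mulr_natl.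
have -> : c = c / r + c * (1 - r^-1) by rewrite mulrBr mulr1 addrC subrK.
apply: lerD; last by rewrite ler_pM2r // subr_gt0 invf_lt1.
rewrite ler_pM2r ?invr_gt0 //; apply: le_trans sumc.
rewrite [leRHS](bigID P) /= lerDl; apply: sumr_ge0 => i _; exact: powR_ge0.
Qed.

Lemma sum_le_pnorm n (f : 'I_n -> R) (P : pred 'I_n) (c : R) :
  0 < c -> #|P|%:R <= c -> \sum_(i | P i) `|f i| <= c `^ (1 - r^-1) * pnorm r f.
Proof.
move=> c0 Pc.
have [f0|f0] := eqVneq (pnorm r f) 0.
  by rewrite f0 mulr0 big1 // => i _; rewrite (pnorm_eq0 f0) normr0.
have pf : 0 < pnorm r f by rewrite lt0r f0; apply: pnorm_ge0.
pose g i := c `^ r^-1 * (`|f i| / pnorm r f).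
have g0 i : 0 <= g i by rewrite mulr_ge0 ?powR_ge0 ?divr_ge0 // ltW.
have sum_g : \sum_i g i `^ r <= c.
  have gr i : g i `^ r = c * (`|f i| / pnorm r f) `^ r.
    rewrite powRM ?powR_ge0 ?divr_ge0 ?(ltW pf) // -powRrM mulVf ?gt_eqF //.
    by rewrite powRr1 // ltW.
  under eq_bigr do rewrite gr.
  by rewrite -mulr_sumr (sum_powR_normalized r_gt0 pf) mulr1.
have := sum_le_of_sum_powR g0 sum_g Pc.
rewrite -mulr_sumr -mulr_suml mulrA ler_pdivrMr // => le_c.
rewrite powRB ?(gt_eqF c0) ?implybT // powRr1 ?(ltW c0) //.
by rewrite mulrAC ler_pdivlMr ?powR_gt0 // mulrC.
Qed.

End power_mean.

Section norms.
Variable R : realType.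
Implicit Types (q : \bar R) (N : nat).

Lemma ler_linfnorm N (z : 'cV[R]_N) i : `|z i ord0| <= linfnorm z.
Proof. exact: (le_bigmax_cond _ (fun i => `|z i ord0|) (erefl true)). Qed.

Lemma linfnorm_le N (z : 'cV[R]_N) (c : R) :
  0 <= c -> (forall i, `|z i ord0| <= c) -> linfnorm z <= c.
Proof. by move=> c0 zc; apply: bigmax_le. Qed.

Lemma lqnorm_fin (r : R) N (z : 'cV[R]_N) : lqnorm r%:E z = pnorm r (fun i => z i ord0).
Proof. by []. Qed.

Lemma lqnorm_ge0 q N (z : 'cV[R]_N) : 0 <= lqnorm q z.
Proof. by case: q => [r| |] /=; rewrite ?powR_ge0 ?bigmax_ge_id. Qed.

Lemma l1norm_ge0 N (z : 'cV[R]_N) : 0 <= l1norm z.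
Proof. by apply: sumr_ge0 => i _. Qed.

Lemma l2norm_ge0 N (z : 'cV[R]_N) : 0 <= l2norm z.
Proof. exact: sqrtr_ge0. Qed.

Lemma l2norm_pnorm N (z : 'cV[R]_N) : l2norm z = pnorm 2 (fun i => z i ord0).
Proof.
rewrite /l2norm /pnorm powR12_sqrt; last by apply: sumr_ge0 => i _; apply: powR_ge0.
congr Num.sqrt; apply: eq_bigr => i _.
by rewrite powR_mulrn // real_normK // num_real.
Qed.

Lemma l2normB N (u v : 'cV[R]_N) : l2norm (u - v) <= l2norm u + l2norm v.
Proof.
rewrite !l2norm_pnorm.
have -> : pnorm 2 (fun i => v i ord0) = pnorm 2 (fun i => - v i ord0).
  by rewrite /pnorm; congr powR; apply: eq_bigr => i _; rewrite normrN.
have -> : (fun i => (u - v) i ord0) = (fun i => u i ord0 + - v i ord0).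
  by apply/funext => i; rewrite !mxE.
by apply: minkowski; rewrite ler1n.
Qed.

Variable q : \bar R.
Hypothesis q_gt1 : (1%:E < q)%E.

Lemma qexp_gt0 : 0 < qexp q.
Proof.
case: q q_gt1 => [r| |] //= r1; rewrite lte_fin in r1.
by rewrite subr_gt0 invf_lt1 // (lt_trans _ r1).
Qed.

Lemma qconj_gt0 : 0 < qconj q.
Proof.
case: q q_gt1 => [r| |] //= r1; rewrite lte_fin in r1.
by rewrite divr_gt0 ?subr_gt0 // (lt_trans _ r1).
Qed.

Lemma qconjM : qconj q * qexp q = 1.
Proof.
case: q q_gt1 => [r| |] //= r1; last by rewrite mulr1.
rewrite lte_fin in r1.
by field; rewrite subr_eq0 !gt_eqF // (lt_trans _ r1).
Qed.

Lemma lqnorm0 N : lqnorm q (0 : 'cV[R]_N) = 0.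
Proof.
case: q q_gt1 => [r| |] // r1 /=.
- rewrite lte_fin in r1; have r0 : r != 0 by rewrite gt_eqF // (lt_trans _ r1).
  by rewrite big1 ?powR0 ?invr_neq0 // => i _; rewrite mxE normr0 powR0.
- apply/eqP; rewrite eq_le bigmax_ge_id andbT; apply: linfnorm_le => // i.
  by rewrite mxE normr0.
Qed.

Lemma lqnorm_gt0 N (z : 'cV[R]_N) : z != 0 -> 0 < lqnorm q z.
Proof.
move=> z0; rewrite lt0r lqnorm_ge0 andbT; apply: contra z0 => /eqP lq0.
apply/eqP/matrixP => i j; rewrite (ord1 j) mxE; apply/normr0_eq0/eqP.
rewrite eq_le normr_ge0 andbT.
case: q q_gt1 lq0 => [r| |] // _ lq0; last by rewrite -lq0 ler_linfnorm.
rewrite lqnorm_fin in lq0.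
by rewrite (pnorm_eq0 lq0) normr0.
Qed.

Lemma lqnormD N (u v : 'cV[R]_N) : lqnorm q (u + v) <= lqnorm q u + lqnorm q v.
Proof.
case: q q_gt1 => [r| |] // r1.
- rewrite lte_fin in r1; rewrite !lqnorm_fin.
  have -> : (fun i => (u + v) i ord0) = (fun i => u i ord0 + v i ord0).
    by apply/funext => i; rewrite mxE.
  exact: (minkowski _ _ (ltW r1)).
- apply: linfnorm_le => [|i]; first by rewrite addr_ge0 ?bigmax_ge_id.
  rewrite mxE; apply: le_trans (ler_normD _ _) _.
  by rewrite lerD ?ler_linfnorm.
Qed.

Lemma sum_le_lqnorm N (z : 'cV[R]_N) (P : pred 'I_N) (c : R) :
  0 < c -> #|P|%:R <= c -> \sum_(i | P i) `|z i ord0| <= c `^ qexp q * lqnorm q z.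
Proof.
case: q q_gt1 => [r| |] // r1 c0 Pc.
- by rewrite lte_fin in r1; apply: sum_le_pnorm.
- rewrite /= powRr1; last exact: ltW.
  apply: le_trans (_ : \sum_(i | P i) linfnorm z <= _).
    by apply: ler_sum => i _; apply: ler_linfnorm.
  by rewrite sumr_const -mulr_natl ler_wpM2r ?bigmax_ge_id.
Qed.

Lemma sq_powR_qexp N (z : 'cV[R]_N) : sq q z `^ qexp q = l1norm z / lqnorm q z.
Proof.
by rewrite /sq -powRrM qconjM powRr1 // divr_ge0 ?l1norm_ge0 ?lqnorm_ge0.
Qed.

Lemma sq_le_powR N (z : 'cV[R]_N) (c : R) : 0 <= c ->
  l1norm z / lqnorm q z <= c -> sq q z <= c `^ qconj q.
Proof.
move=> c0 zc; apply: ge0_ler_powR zc; rewrite ?nnegrE //; first exact: ltW qconj_gt0.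
by rewrite divr_ge0 ?l1norm_ge0 ?lqnorm_ge0.
Qed.

Lemma rho_le (s : R) m N (A : 'M[R]_(m, N)) (z : 'cV[R]_N) :
  z != 0 -> sq q z <= s -> rho q s A <= l2norm (A *m z) / lqnorm q z.
Proof.
move=> z0 zs; apply: ge_inf; last by exists z.
exists 0 => _ [v [_ _ ->]]; exact: divr_ge0 (l2norm_ge0 _) (lqnorm_ge0 _ _).
Qed.

Lemma lqnorm_le_rho (s : R) m N (A : 'M[R]_(m, N)) (z : 'cV[R]_N) :
  0 < rho q s A -> z != 0 -> sq q z <= s -> lqnorm q z <= l2norm (A *m z) / rho q s A.
Proof.
move=> rho0 z0 zs; rewrite ler_pdivlMr // mulrC -ler_pdivlMr ?lqnorm_gt0 //.
exact: rho_le.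
Qed.

End norms.

Lemma le_affine_inf (R : realType) (D : set R) (l a b : R) : 0 < b -> (D !=set0)%classic ->
  (forall d, D d -> l <= a + b * d) -> l <= a + b * inf D.
Proof.
move=> b0 D0 lD; rewrite -lerBlDl -ler_pdivrMl //.
by apply: lb_le_inf => // d Dd; rewrite ler_pdivrMl // lerBlDl; apply: lD.
Qed.

Section recovery.
Variable R : realType.

Lemma l2norm_mulmxB_le m N (A : 'M[R]_(m, N)) (y : 'cV[R]_m) (u v : 'cV[R]_N) (eta : R) :
  l2norm (y - A *m u) <= eta -> l2norm (y - A *m v) <= eta ->
  l2norm (A *m (u - v)) <= 2 * eta.
Proof.
move=> yu yv; have := l2normB (y - A *m v) (y - A *m u).
have -> : y - A *m v - (y - A *m u) = A *m (u - v).
  by rewrite mulmxBr opprB addrC addrA subrK.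
lra.
Qed.

Lemma l1norm_sub_split N (u x z : 'cV[R]_N) :
  l1norm (u - x) <= (l1norm u - l1norm x)
    + 2 * \sum_(i | z i ord0 != 0) `|(u - x) i ord0| + 2 * l1norm (x - z).
Proof.
rewrite /l1norm -sumrB !mulr_sumr [\sum_(i | z i ord0 != 0) _]big_mkcond /= -!big_split /=.
apply: ler_sum => i _; rewrite !mxE.
have le_dist : `|x i ord0| <= `|u i ord0| + `|u i ord0 - x i ord0|.
  by rewrite distrC -{1}(subrKC (u i ord0) (x i ord0)) ler_normD.
have le_sum := ler_normB (u i ord0) (x i ord0).
have [->|_] /= := eqVneq (z i ord0) 0; first by rewrite subr0; lra.
by have := normr_ge0 (x i ord0 - z i ord0); lra.
Qed.

Variables (m N : nat) (A : 'M[R]_(m, N)) (y : 'cV[R]_m) (eta : R) (q : \bar R).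
Variables (k : nat) (x xhat z : 'cV[R]_N).
Hypotheses (q_gt1 : (1%:E < q)%E) (x_neq0 : x != 0) (k_gt0 : (0 < k)%N).
Hypotheses (x_feasible : l2norm (y - A *m x) <= eta)
  (xhat_sol : is_solution q A y eta xhat)
  (z_sparse : (#|[set i : 'I_N | z i ord0 != 0%R]| <= k)%N).

Lemma l1norm_sol_le :
  l1norm xhat <= l1norm x + l1norm x / lqnorm q x * lqnorm q (xhat - x).
Proof.
case: xhat_sol => xhat_neq0 _ xhat_min.
have lqx : 0 < lqnorm q x := lqnorm_gt0 q_gt1 x_neq0.
have lqxhat : 0 < lqnorm q xhat := lqnorm_gt0 q_gt1 xhat_neq0.
have tri : lqnorm q xhat <= lqnorm q x + lqnorm q (xhat - x).
  by rewrite -{1}(subrKC x xhat); apply: lqnormD.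
apply: le_trans (_ : l1norm x / lqnorm q x * lqnorm q xhat <= _).
  by rewrite -ler_pdivrMr //; apply: xhat_min.
apply: le_trans (ler_wpM2l _ tri) _; first by rewrite divr_ge0 ?l1norm_ge0 ?lqnorm_ge0.
by rewrite mulrDr divfK ?gt_eqF.
Qed.

Lemma l1norm_err_le : l1norm (xhat - x) <=
  (2 * k%:R `^ qexp q + l1norm x / lqnorm q x) * lqnorm q (xhat - x) + 2 * l1norm (x - z).
Proof.
have supp_le : \sum_(i | z i ord0 != 0) `|(xhat - x) i ord0| <= k%:R `^ qexp q * lqnorm q (xhat - x).
  by apply: sum_le_lqnorm; rewrite ?ltr0n // ler_nat -cardsE.
have := l1norm_sub_split xhat x z; have := l1norm_sol_le; rewrite mulrDl; lra.
Qed.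

Hypothesis rho_gt0 : 0 < rho q (Cq q k x) A.

Lemma lqnorm_err_le : lqnorm q (xhat - x) <=
  2 * eta / rho q (Cq q k x) A + k%:R `^ (- qexp q) * l1norm (x - z).
Proof.
have k0 : 0 < k%:R :> R by rewrite ltr0n.
have K0 : 0 < k%:R `^ qexp q := powR_gt0 _ k0.
have eta0 : 0 <= eta := le_trans (l2norm_ge0 _) x_feasible.
have rx0 : 0 <= l1norm x / lqnorm q x by rewrite divr_ge0 ?l1norm_ge0 ?lqnorm_ge0.
have noise0 : 0 <= 2 * eta / rho q (Cq q k x) A.
  by rewrite divr_ge0 ?mulr_ge0 // ltW.
have dist0 := mulr_ge0 (ltW (powR_gt0 (- qexp q) k0)) (l1norm_ge0 (x - z)).
have err_le := l1norm_err_le.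
have [err_cone|err_off_cone] := lerP (l1norm (xhat - x))
  ((4 * k%:R `^ qexp q + l1norm x / lqnorm q x) * lqnorm q (xhat - x)).
- suff : lqnorm q (xhat - x) <= 2 * eta / rho q (Cq q k x) A.
    by lra.
  have [->|err_neq0] := eqVneq (xhat - x) 0.
    by rewrite lqnorm0.
  have lqerr0 : 0 < lqnorm q (xhat - x) := lqnorm_gt0 q_gt1 err_neq0.
  apply: le_trans (lqnorm_le_rho q_gt1 rho_gt0 err_neq0 _) _.
    rewrite /Cq sq_powR_qexp //; apply: sq_le_powR => //.
      by rewrite addr_ge0 // mulr_ge0 // ltW.
    by rewrite ler_pdivrMr.
  rewrite ler_pM2r ?invr_gt0 //.
  case: xhat_sol => _ xhat_feasible _.
  exact: l2norm_mulmxB_le xhat_feasible x_feasible.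
- have : k%:R `^ qexp q * lqnorm q (xhat - x) < l1norm (x - z).
    by rewrite mulrDl in err_off_cone err_le; lra.
  rewrite -ltr_pdivlMl // -powRN => lt_dist.
  by lra.
Qed.

Lemma l1norm_err_le_rho : l1norm (xhat - x) <=
  (4 * k%:R `^ qexp q + 2 * sq q x `^ qexp q) * eta / rho q (Cq q k x) A
  + (4 + (sq q x / k%:R) `^ qexp q) * l1norm (x - z).
Proof.
have k0 : 0 < k%:R :> R by rewrite ltr0n.
have KV : k%:R `^ qexp q * k%:R `^ (- qexp q) = 1.
  by rewrite powRN mulfV // lt0r_neq0 // powR_gt0.
rewrite powR_div ?ler0n ?[0 <= sq _ _]powR_ge0 // sq_powR_qexp // -powRN.
have coef0 : 0 <= 2 * k%:R `^ qexp q + l1norm x / lqnorm q x.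
  exact: addr_ge0 (mulr_ge0 (ler0n _ 2) (powR_ge0 _ _)) (divr_ge0 (l1norm_ge0 _) (lqnorm_ge0 _ _)).
have := ler_wpM2l coef0 lqnorm_err_le; have := l1norm_err_le.
have expand : (2 * k%:R `^ qexp q + l1norm x / lqnorm q x) *
    (2 * eta / rho q (Cq q k x) A + k%:R `^ (- qexp q) * l1norm (x - z)) =
  (4 * k%:R `^ qexp q + 2 * (l1norm x / lqnorm q x)) * eta / rho q (Cq q k x) A
  + 2 * (k%:R `^ qexp q * k%:R `^ (- qexp q)) * l1norm (x - z)
  + l1norm x / lqnorm q x * k%:R `^ (- qexp q) * l1norm (x - z) by ring.
rewrite KV mulr1 in expand.
lra.
Qed.

End recovery.

Theorem theorem2 (R : realType) (m N : nat) (A : 'M[R]_(m, N)) (eta : R)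
  (x : 'cV[R]_N) (k : nat) (eps : 'cV[R]_m) (y : 'cV[R]_m) (q : \bar R)
  (xhat : 'cV[R]_N) :
  0 <= eta -> x != 0 -> (1 <= k)%N -> (k <= N)%N ->
  y = A *m x + eps -> l2norm eps <= eta ->
  (1%:E < q)%E ->
  0 < rho q (Cq q k x) A ->
  is_solution q A y eta xhat ->
  lqnorm q (xhat - x) <=
    2 * eta / rho q (Cq q k x) A + k%:R `^ (- qexp q) * sigma1 k x /\
  l1norm (xhat - x) <=
    (4 * k%:R `^ qexp q + 2 * sq q x `^ qexp q) * eta / rho q (Cq q k x) A
    + (4 + (sq q x / k%:R) `^ qexp q) * sigma1 k x.
Proof.
move=> _ x_neq0 k_gt0 _ -> eps_le q_gt1 rho_gt0 xhat_sol.
have x_feasible : l2norm (A *m x + eps - A *m x) <= eta by rewrite addrAC subrr add0r.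
have sparse_nonempty : ([set r | exists z : 'cV[R]_N,
    (#|[set i : 'I_N | z i ord0 != 0%R]%SET| <= k)%N /\ r = l1norm (x - z)] !=set0)%classic.
  exists (l1norm (x - 0)), 0; split => //.
  by rewrite (eq_card0 (_ : _ =i pred0)) // => i; rewrite !inE mxE eqxx.
split; apply: le_affine_inf sparse_nonempty _.
- by rewrite powR_gt0 // ltr0n.
- move=> _ [z [z_sparse ->]].
  exact: lqnorm_err_le q_gt1 x_neq0 k_gt0 x_feasible xhat_sol z_sparse rho_gt0.
- by have := powR_ge0 (sq q x / k%:R) (qexp q); lra.
- move=> _ [z [z_sparse ->]].
  exact: l1norm_err_le_rho q_gt1 x_neq0 k_gt0 x_feasible xhat_sol z_sparse rho_gt0.
Qed.
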